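(* Let $F=(f_1,\dots,f_s)$ be nonzero polynomials in $K[\mathbf{X}]$. Then the vertices of the Newton polyhedron $\mathscr N(F)$ are in one-to-one correspondence with the equivalence classes of term orders with respect to $F$.
   Context: $K$ is a field complete for a discrete valuation $\mathrm{val}$. A term is $c\mathbf{X}^\alpha$ with $c\in K^\times$. For $\mathbf{r}\in\mathbb{Q}^n$, $\mathrm{val}_{\mathbf{r}}(c\mathbf{X}^\alpha)=\mathrm{val}(c)-\mathbf{r}\cdot\alpha$. The term orders considered are those of the form $<_{\mathbf{r},m}$ with $\mathbf{r}\in\mathbb{Q}^n$ and $\le_m$ a monomial order: $a\mathbf{X}^\alpha<_{\mathbf{r},m}b\mathbf{X}^\beta$ iff $\mathrm{val}_{\mathbf{r}}(a\mathbf{X}^\alpha)>\mathrm{val}_{\mathbf{r}}(b\mathbf{X}^\beta)$, or they are equal and $\mathbf{X}^\alpha<_m\mathbf{X}^\beta$. $\mathrm{LT}_<(f)$ is the largest term of $f$. Two term orders $<_1,<_2$ are equivalent with respect to $F$ if $\{\mathrm{LT}_{<_1}(f_i)\}_i=\{\mathrm{LT}_{<_2}(f_i)\}_i$. For nonzero $f$, $\mathscr N(f)=\mathrm{conv}\{(\mathrm{val}(c),\alpha):c\mathbf{X}^\alpha\text{ a term of }f\}+\mathbb{R}_{\ge0}(1,0,\dots,0)\subseteq\mathbb{R}^{n+1}$, and $\mathscr N(F)$ is the Minkowski sum of the $\mathscr N(f_i)$. *)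

From HB Require Import structures.
From mathcomp Require Import all_boot all_order all_algebra.
From mathcomp Require Import mpoly.
From mathcomp Require Import reals.
Set Implicit Arguments. Unset Strict Implicit. Unset Printing Implicit Defensive.
Import Order.TTheory GRing.Theory Num.Theory.
Local Open Scope ring_scope.

(* val : K -> int is the valuation on K^x (its value at 0 is irrelevant:
   val 0 = +oo is handled by never using val at 0). *)
Definition discrete_valuation (K : fieldType) (val : K -> int) : Prop :=
  [/\ (forall x y : K, x != 0 -> y != 0 -> val (x * y) = val x + val y),
      (forall x y : K, x != 0 -> y != 0 -> x + y != 0 ->
          Num.min (val x) (val y) <= val (x + y))
    & (exists pi : K, pi != 0 /\ val pi = 1)].

(* "x and y are congruent to precision N": val (x - y) >= N, with val 0 = +oo *)
Definition val_close (K : fieldType) (val : K -> int) (N : int) (x y : K) : Prop :=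
  x = y \/ N <= val (x - y).

Definition val_complete (K : fieldType) (val : K -> int) : Prop :=
  forall u : nat -> K,
    (forall N : int, exists M : nat, forall p q, (M <= p)%N -> (M <= q)%N ->
        val_close val N (u p) (u q)) ->
    exists l : K, forall N : int, exists M : nat, forall p, (M <= p)%N ->
        val_close val N (u p) l.

Definition monomial_order (n : nat) (le : rel 'X_{1..n}) : Prop :=
  reflexive le /\ antisymmetric le /\ transitive le /\ total le /\
  (forall a b c : 'X_{1..n}, le a b -> le (mnm_add a c) (mnm_add b c)) /\
  (forall a : 'X_{1..n}, le (@mnm0 n) a).

(* a term c X^alpha (c <> 0) is represented by the pair (c, alpha) *)
Definition term (K : fieldType) (n : nat) := (K * 'X_{1..n})%type.

Definition val_r (K : fieldType) (val : K -> int) (n : nat) (r : 'I_n -> rat)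
  (t : term K n) : rat :=
  (val t.1)%:~R - \sum_(i < n) r i * (t.2 i)%:R.

Definition term_lt (K : fieldType) (val : K -> int) (n : nat) (r : 'I_n -> rat)
  (le : rel 'X_{1..n}) (t1 t2 : term K n) : Prop :=
  val_r val r t1 > val_r val r t2 \/
  (val_r val r t1 = val_r val r t2 /\ le t1.2 t2.2 /\ t1.2 != t2.2).

Definition is_term_of (K : fieldType) (n : nat) (f : {mpoly K[n]}) (t : term K n)
  : Prop := t.2 \in msupp f /\ t.1 = f@_(t.2).

Definition is_LT (K : fieldType) (val : K -> int) (n : nat) (r : 'I_n -> rat)
  (le : rel 'X_{1..n}) (f : {mpoly K[n]}) (t : term K n) : Prop :=
  is_term_of f t /\
  forall t', is_term_of f t' -> t' <> t -> term_lt val r le t' t.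

Definition equiv_wrt (K : fieldType) (val : K -> int) (n s : nat)
  (F : 'I_s -> {mpoly K[n]}) (r1 : 'I_n -> rat) (le1 : rel 'X_{1..n})
  (r2 : 'I_n -> rat) (le2 : rel 'X_{1..n}) : Prop :=
  forall (i : 'I_s) (t : term K n), is_LT val r1 le1 (F i) t <-> is_LT val r2 le2 (F i) t.

(* coordinate 0 is the valuation coordinate, coordinate lift ord0 j is alpha_j *)
Definition term_point (R : realType) (K : fieldType) (val : K -> int) (n : nat)
  (t : term K n) : 'rV[R]_n.+1 :=
  \row_(k < n.+1) (if unlift ord0 k is Some j then ((t.2 j)%:R : R)
                   else ((val t.1)%:~R : R)).

Definition e0 (R : realType) (n : nat) : 'rV[R]_n.+1 :=
  \row_(k < n.+1) (if k == ord0 then 1 else 0).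

Definition newton_polyhedron (R : realType) (K : fieldType) (val : K -> int)
  (n : nat) (f : {mpoly K[n]}) : 'rV[R]_n.+1 -> Prop :=
  fun x => exists (lam : 'X_{1..n} -> R) (u : R),
    [/\ (forall a, a \in msupp f -> 0 <= lam a),
        \sum_(a <- msupp f) lam a = 1,
        0 <= u
      & x = \sum_(a <- msupp f) lam a *: @term_point R K val n (f@_a, a) + u *: e0 R n].

Definition newton_polyhedron_fam (R : realType) (K : fieldType) (val : K -> int)
  (n s : nat) (F : 'I_s -> {mpoly K[n]}) : 'rV[R]_n.+1 -> Prop :=
  fun x => exists y : 'I_s -> 'rV[R]_n.+1,
    (forall i, @newton_polyhedron R K val n (F i) (y i)) /\ x = \sum_(i < s) y i.

Definition is_vertex (R : realType) (m : nat) (P : 'rV[R]_m -> Prop) (v : 'rV[R]_m)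
  : Prop :=
  P v /\ forall (x y : 'rV[R]_m) (t : R), P x -> P y -> 0 < t -> t < 1 ->
    v = t *: x + (1 - t) *: y -> x = v /\ y = v.

(* For a term order <_{r,m} let a_i be the leading exponent of f_i.  On the
   finitely many exponents involved, the monomial order m is realised by a
   weight, so a rational perturbation w of r makes every a_i the unique
   minimiser of val_w on the support of f_i; the linear form
   z_0 - w.(z_1, ..., z_n) is then minimised on N(F) exactly at
   sum_i (val c_i, a_i), which is therefore a vertex.  Conversely a vertex of
   the Minkowski sum is a sum of vertices of the summands, i.e. of points of
   terms, and as the feasible directions at a vertex form a pointed cone
   containing (1, 0, ..., 0), some weight w isolates these terms; every order
   <_{w,m} selects them.  Both weights come from Motzkin's transposition
   theorem, proved by Fourier-Motzkin elimination.  Finally, two term orders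
   giving the same point have equal sums of val_r and of exponents, and a
   monomial order, being compatible with addition, then forces equal leading
   terms. *)

From HB Require Import structures.
From mathcomp Require Import all_boot all_order all_algebra.
From mathcomp Require Import mpoly.
From mathcomp Require Import reals.
From mathcomp Require Import ring lra.
From Stdlib Require List Classical ClassicalEpsilon.
Set Implicit Arguments. Unset Strict Implicit. Unset Printing Implicit Defensive.
Import Order.TTheory GRing.Theory Num.Theory.
Local Open Scope ring_scope.

Section StrictAlternative.
Variable F : realFieldType.

(* A constraint [(g, h)] on [w] reads [0 < g + w . h]; constraints are not an
   eqType, so lists of them are searched with [List.In]. *)
Definition constr (m : nat) := (F * ('I_m -> F))%type.

Definition dotp m (w h : 'I_m -> F) := \sum_(j < m) w j * h j.

Definition feasible m (cs : seq (constr m)) (w : 'I_m -> F) :=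
  forall g h, List.In (g, h) cs -> 0 < g + dotp w h.

Inductive cone_gen m (cs : seq (constr m)) : F -> ('I_m -> F) -> Prop :=
| cone_base g h : List.In (g, h) cs -> cone_gen cs g h
| cone_add g1 h1 g2 h2 : cone_gen cs g1 h1 -> cone_gen cs g2 h2 ->
    cone_gen cs (g1 + g2) (fun j => h1 j + h2 j)
| cone_scale a g h : 0 < a -> cone_gen cs g h -> cone_gen cs (a * g) (fun j => a * h j)
| cone_ext g h h' : cone_gen cs g h -> (forall j, h j = h' j) -> cone_gen cs g h'.

Lemma dotpDr m (w h1 h2 : 'I_m -> F) a b :
  dotp w (fun j => a * h1 j + b * h2 j) = a * dotp w h1 + b * dotp w h2.
Proof. by rewrite /dotp !mulr_sumr -big_split /=; apply: eq_bigr => j _; ring. Qed.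

Lemma exists_lt_all (U : seq F) : exists x, forall u, List.In u U -> x < u.
Proof.
elim: U => [|u U [x Hx]]; first by exists 0.
have [xu|ux] := lerP x u; first by exists (x - 1) => v /= [<-|/Hx]; lra.
by exists (u - 1) => v /= [<-|/Hx]; lra.
Qed.

Lemma exists_gt_below (l : F) (U : seq F) : (forall u, List.In u U -> l < u) ->
  exists y, l < y /\ forall u, List.In u U -> y < u.
Proof.
elim: U => [|u U IH] H; first by exists (l + 1); split => //; lra.
have [y [ly Hy]] := IH (fun v Hv => H v (or_intror Hv)).
have lu : l < u by apply: H; left.
have [yu|uy] := ltrP y u; first by exists y; split => // v /= [<-|/Hy].
exists ((l + u) / 2); split; first lra.
by move=> v /= [<-|/Hy]; lra.
Qed.

Lemma exists_between (L U : seq F) :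
  (forall l u, List.In l L -> List.In u U -> l < u) ->
  exists x, (forall l, List.In l L -> l < x) /\ (forall u, List.In u U -> x < u).
Proof.
elim: L => [|l L IH] H.
  by have [y Hy] := exists_lt_all U; exists y.
have [x [Hx1 Hx2]] := IH (fun l' u Hl Hu => H l' u (or_intror Hl) Hu).
have [lx|xl] := ltrP l x; first by exists x; split => // l' /= [<-|/Hx1].
have [y [ly Hy]] := exists_gt_below (fun u Hu => H l u (or_introl erefl) Hu).
by exists y; split => // l' /= [<-|/Hx1]; lra.
Qed.

Section Elimination.
Variable m : nat.
Implicit Types (c : constr m.+1) (cs : seq (constr m.+1)).

Definition last_coef c := c.2 ord_max.
Definition init_coefs c : 'I_m -> F := fun j => c.2 (widen_ord (leqnSn m) j).

Definition fm_drop c : constr m := (c.1, init_coefs c).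
Definition fm_comb p q : constr m :=
  ((- last_coef q) * p.1 + last_coef p * q.1,
   fun j => (- last_coef q) * init_coefs p j + last_coef p * init_coefs q j).

Definition fm_elim cs : seq (constr m) :=
  List.map fm_drop (List.filter (fun c => last_coef c == 0) cs) ++
  List.flat_map (fun p => List.map (fm_comb p) (List.filter (fun c => last_coef c < 0) cs))
    (List.filter (fun c => 0 < last_coef c) cs).

Definition extend (w : 'I_m -> F) (x : F) : 'I_m.+1 -> F :=
  fun j => if unlift ord_max j is Some j' then w j' else x.

Definition slack (w : 'I_m -> F) c := c.1 + dotp w (init_coefs c).

Lemma slack_extend w x c :
  c.1 + dotp (extend w x) c.2 = slack w c + x * last_coef c.
Proof.
rewrite /slack /dotp big_ord_recr /= /extend unlift_none addrA; congr (_ + _ + _).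
apply: eq_bigr => j _; suff -> : unlift ord_max (widen_ord (leqnSn m) j) = Some j by [].
have -> : widen_ord (leqnSn m) j = lift ord_max j.
  by apply: val_inj => /=; rewrite /bump leqNgt ltn_ord.
exact: liftK.
Qed.

Lemma fm_elim_drop cs c : List.In c cs -> last_coef c = 0 -> List.In (fm_drop c) (fm_elim cs).
Proof.
move=> Hc c0; apply/List.in_or_app; left; apply/List.in_map.
by apply/List.filter_In; rewrite c0 eqxx.
Qed.

Lemma fm_elim_comb cs p q : List.In p cs -> List.In q cs ->
  0 < last_coef p -> last_coef q < 0 -> List.In (fm_comb p q) (fm_elim cs).
Proof.
move=> Hp Hq lp lq; apply/List.in_or_app; right; apply/List.in_flat_map.
by exists p; split; [apply/List.filter_In | apply/List.in_map/List.filter_In].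
Qed.

(* The slack of [fm_comb p q] is the positive combination of the slacks of
   [p] and [q] that cancels the last variable. *)
Lemma fm_elim_feasible cs w : feasible (fm_elim cs) w -> exists x, feasible cs (extend w x).
Proof.
move=> Hw.
have Hcomb p q : List.In p cs -> List.In q cs -> 0 < last_coef p -> last_coef q < 0 ->
    - slack w p / last_coef p < slack w q / - last_coef q.
  move=> Hp Hq lp lq; have := Hw _ _ (fm_elim_comb Hp Hq lp lq).
  have -> : (fm_comb p q).1 + dotp w (fm_comb p q).2 =
      - last_coef q * slack w p + last_coef p * slack w q.
    by rewrite dotpDr /slack /=; ring.
  move: (slack w p) (slack w q) (last_coef p) (last_coef q) lp lq => sp sq a b ha hb H.
  rewrite -subr_gt0.
  have -> : sq / - b - - sp / a = (- b * sp + a * sq) / (a * - b).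
    by field; apply/andP; split; apply/negP => /eqP; lra.
  by apply: divr_gt0; [lra | apply: mulr_gt0; lra].
pose L := List.map (fun p => - slack w p / last_coef p) (List.filter (fun c => 0 < last_coef c) cs).
pose U := List.map (fun q => slack w q / - last_coef q) (List.filter (fun c => last_coef c < 0) cs).
have [|x [HL HU]] := @exists_between L U.
  move=> l u /List.in_map_iff [p [<- /List.filter_In [Hp lp]]].
  by move=> /List.in_map_iff [q [<- /List.filter_In [Hq lq]]]; apply: Hcomb.
exists x => g h Hc; rewrite (slack_extend w x (g, h)).
have [lp|lq|l0] := ltrgt0P (last_coef (g, h)).
- have := HL _ (List.in_map _ _ (g, h) (proj2 (List.filter_In _ _ _) (conj Hc lp))).
  by rewrite ltr_pdivrMr // => H; lra.
- have := HU _ (List.in_map _ _ (g, h) (proj2 (List.filter_In _ _ _) (conj Hc lq))).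
  by rewrite ltr_pdivlMr ?oppr_gt0 // => H; lra.
- by rewrite l0 mulr0 addr0; apply: (Hw _ _ (fm_elim_drop Hc l0)).
Qed.

Lemma fm_elim_cone cs g h : cone_gen (fm_elim cs) g h ->
  exists h0, [/\ cone_gen cs g h0, forall j, h0 (widen_ord (leqnSn m) j) = h j
                & h0 ord_max = 0].
Proof.
elim=> {g h}.
- move=> g h /List.in_app_iff [/List.in_map_iff [c [[<- <-] /List.filter_In [Hc /eqP c0]]]|].
    by exists c.2; split => //; case: c Hc {c0} => ? ? ?; apply: cone_base.
  move=> /List.in_flat_map [p [/List.filter_In [Hp lp]]].
  move=> /List.in_map_iff [q [[<- <-] /List.filter_In [Hq lq]]].
  exists (fun j => (- last_coef q) * p.2 j + last_coef p * q.2 j); split => //.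
    apply: cone_add; apply: cone_scale; rewrite ?oppr_gt0 //;
    by [case: p Hp {lp} => ? ? ?; apply: cone_base | case: q Hq {lq} => ? ? ?; apply: cone_base].
  by rewrite /= mulNr mulrC addNr.
- move=> g1 h1 g2 h2 _ [k1 [D1 E1 Z1]] _ [k2 [D2 E2 Z2]].
  exists (fun j => k1 j + k2 j); split; first exact: cone_add.
    by move=> j; rewrite E1 E2.
  by rewrite Z1 Z2 addr0.
- move=> a g h ha _ [k [D E Z]].
  exists (fun j => a * k j); split; first exact: cone_scale.
    by move=> j; rewrite E.
  by rewrite Z mulr0.
- move=> g h h' _ [k [D E Z]] Hhh.
  by exists k; split => // j; rewrite E Hhh.
Qed.

End Elimination.

Theorem motzkin_transposition m (cs : seq (constr m)) :
  (exists w, feasible cs w) \/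
  (exists g h, [/\ cone_gen cs g h, forall j, h j = 0 & g <= 0]).
Proof.
elim: m cs => [|m IH] cs.
  have [[g [h [Hin Hg]]]|H] := Classical_Prop.classic (exists g h, List.In (g, h) cs /\ g <= 0).
    by right; exists g, h; split; [exact: cone_base | case | ].
  left; exists (fun _ => 0) => g h Hin; rewrite /dotp big_ord0 addr0 ltNge.
  by apply/negP => Hg; apply: H; exists g, h.
case: (IH (fm_elim cs)) => [[w /fm_elim_feasible [x Hx]]|[g [h [Hd Hh Hg]]]].
  by left; exists (extend w x).
right; have [h0 [D0 E0 Z0]] := fm_elim_cone Hd.
exists g, h0; split => // j.
case: (unliftP ord_max j) => [j' ->|->] //.
have -> : lift ord_max j' = widen_ord (leqnSn m) j'.
  by apply: val_inj => /=; rewrite /bump leqNgt ltn_ord.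
by rewrite E0 Hh.
Qed.

End StrictAlternative.

Section MonomialOrder.
Variables (n : nat) (le : rel 'X_{1..n}).
Hypothesis Hle : monomial_order le.

Lemma mo_refl a : le a a. Proof. by case: Hle. Qed.

Lemma mo_anti a b : le a b -> le b a -> a = b.
Proof. by case: Hle => _ [H _] h1 h2; apply: H; rewrite h1 h2. Qed.

Lemma mo_trans a b c : le a b -> le b c -> le a c.
Proof. by case: Hle => _ [_ [H _]] h1 h2; apply: H h2. Qed.

Lemma mo_total a b : le a b || le b a.
Proof. by case: Hle => _ [_ [_ [H _]]]; apply: H. Qed.

Lemma mo_addr a b c : le a b -> le (mnm_add a c) (mnm_add b c).
Proof. by case: Hle => _ [_ [_ [_ [H _]]]]; apply: H. Qed.

Lemma mo_add a b c d : le a b -> le c d -> le (mnm_add a c) (mnm_add b d).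
Proof.
move=> h1 h2; apply: (mo_trans (mo_addr c h1)).
by rewrite (addmC b c) (addmC b d); apply: mo_addr.
Qed.

Lemma mo_add_neq a b c d : le a b -> a != b -> le c d -> mnm_add a c != mnm_add b d.
Proof.
move=> h1 ne h2; apply: contra ne => /eqP E.
have h3 : le (mnm_add b d) (mnm_add b c) by rewrite -E; apply: mo_addr.
have h4 : le (mnm_add b c) (mnm_add b d).
  by rewrite (addmC b c) (addmC b d); apply: mo_addr.
by rewrite -(eqm_add2r c) E (mo_anti h4 h3).
Qed.

Lemma mo_muln a b k : (0 < k)%N -> le b a -> b != a ->
  le (mnm_muln b k) (mnm_muln a k) /\ mnm_muln b k != mnm_muln a k.
Proof.
move=> + h ne; elim: k => [//|[|k] IH] _; first by rewrite !mulm1n.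
have [IH1 IH2] := IH erefl; rewrite !(mulmS _ k.+1).
by split; [exact: mo_add | exact: mo_add_neq].
Qed.

Lemma mo_big_add (I : Type) (r : seq I) (a b : I -> 'X_{1..n}) :
  (forall i, le (b i) (a i)) -> has (fun i => b i != a i) r ->
  \big[mnm_add/mnm0]_(i <- r) b i != \big[mnm_add/mnm0]_(i <- r) a i.
Proof.
move=> H; elim: r => [//|i r IH]; rewrite !big_cons /=.
have Hr : le (\big[mnm_add/mnm0]_(i <- r) b i) (\big[mnm_add/mnm0]_(i <- r) a i).
  by elim/big_ind2: _ => //; [exact: mo_refl | move=> *; exact: mo_add].
case/orP => [ne|/IH ne]; first exact: mo_add_neq.
by rewrite (addmC (b i)) (addmC (a i)); apply: mo_add_neq.
Qed.

End MonomialOrder.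

Lemma mnmc_monomial_order n : monomial_order (fun a b : 'X_{1..n} => (a <= b)%O).
Proof.
do !split; [exact: lexx | exact: le_anti | exact: le_trans | exact: le_total | |].
- by move=> a b c h; rewrite lemc_add2l.
- by move=> a; exact: le0x.
Qed.

Section LeadingExponent.
Variables (K : fieldType) (val : K -> int) (n : nat).
Variables (r : 'I_n -> rat) (le : rel 'X_{1..n}).
Hypothesis Hle : monomial_order le.
Implicit Types (f : {mpoly K[n]}) (t : term K n).
Local Notation lt := (term_lt val r le).

Lemma term_lt_asym t1 t2 : lt t1 t2 -> lt t2 t1 -> False.
Proof.
move=> [h1|[e1 [l1 n1]]] [h2|[e2 [l2 n2]]].
- by have := lt_trans h1 h2; rewrite ltxx.
- by move: h1; rewrite e2 ltxx.
- by move: h2; rewrite e1 ltxx.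
- by move: n1; rewrite (mo_anti Hle l1 l2) eqxx.
Qed.

Lemma term_lt_trans t1 t2 t3 : lt t1 t2 -> lt t2 t3 -> lt t1 t3.
Proof.
move=> [h1|[e1 [l1 n1]]] [h2|[e2 [l2 n2]]].
- by left; apply: lt_trans h1.
- by left; rewrite -e2.
- by left; rewrite e1.
- right; split; first by rewrite e1.
  split; first exact: mo_trans l2.
  apply: contra n2 => /eqP E; move: l1; rewrite E => l1.
  by rewrite (mo_anti Hle l2 l1).
Qed.

Lemma term_lt_total t1 t2 : t1.2 != t2.2 -> lt t1 t2 \/ lt t2 t1.
Proof.
move=> ne; have [h|h|h] := ltrgtP (val_r val r t1) (val_r val r t2).
- by right; left.
- by left; left.
- case/orP: (mo_total Hle t1.2 t2.2) => hl; first by left; right.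
  by right; right; rewrite eq_sym.
Qed.

Definition is_lead_exp f a := a \in msupp f /\
  forall b, b \in msupp f -> b != a -> lt (f@_b, b) (f@_a, a).

Lemma lead_exp_exists f : f != 0 -> exists a, is_lead_exp f a.
Proof.
rewrite -msupp_eq0 /is_lead_exp.
elim: (msupp f) => [//|x [|y l] IH] _.
  by exists x; split => [|b]; rewrite ?inE // => /eqP ->; rewrite eqxx.
have [a [Ha1 Ha2]] := IH erefl.
have [->|ne] := eqVneq x a.
  by exists a; split => [|b]; rewrite inE ?eqxx // => /orP[/eqP->|/Ha2//]; rewrite eqxx.
case: (term_lt_total (t1 := (f@_x, x)) (t2 := (f@_a, a)) ne) => h.
  by exists a; split => [|b]; rewrite inE ?Ha1 ?orbT // => /orP[/eqP->|/Ha2//].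
exists x; split => [|b]; first by rewrite inE eqxx.
rewrite inE => /orP[/eqP->|hb]; first by rewrite eqxx.
move=> nbx; have [->//|nba] := eqVneq b a.
exact: term_lt_trans (Ha2 b hb nba) h.
Qed.

Lemma lead_exp_LT f a : is_lead_exp f a -> is_LT val r le f (f@_a, a).
Proof.
move=> [ha H]; split; first by split.
move=> [c b] [/= hb ->] ne; apply: H => //.
by apply/eqP => E; apply: ne; rewrite E.
Qed.

Lemma LT_lead_exp f a t : is_lead_exp f a -> is_LT val r le f t -> t = (f@_a, a).
Proof.
move=> [ha H] [[hb E] H2]; case: t hb E H2 => c b /= hb -> H2.
have [->//|ne] := eqVneq b a.
case: (term_lt_asym (H b hb ne)); apply: H2; first by split.
by move=> [_ E]; move: ne; rewrite E eqxx.
Qed.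

Lemma lead_exp_unique f a a' : is_lead_exp f a -> is_lead_exp f a' -> a = a'.
Proof. by move=> Ha /lead_exp_LT /(LT_lead_exp Ha) [_ ->]. Qed.

Lemma strict_min_lead_exp f a : a \in msupp f ->
  (forall b, b \in msupp f -> b != a -> val_r val r (f@_a, a) < val_r val r (f@_b, b)) ->
  is_lead_exp f a.
Proof. by move=> ha Hmin; split => // b hb nb; left; apply: Hmin. Qed.

Definition lead_exp f : 'X_{1..n} :=
  ClassicalEpsilon.epsilon (inhabits (@mnm0 n)) (is_lead_exp f).

Lemma lead_expP f : f != 0 -> is_lead_exp f (lead_exp f).
Proof. by move=> nz; apply: ClassicalEpsilon.epsilon_spec; apply: lead_exp_exists. Qed.

End LeadingExponent.

Section ConvexCone.
Variables (R : realType) (m : nat) (P : 'rV[R]_m -> Prop).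

Definition convex_set := forall x y (t : R), P x -> P y -> 0 <= t -> t <= 1 ->
  P (t *: x + (1 - t) *: y).

Hypothesis convP : convex_set.
Variable v : 'rV[R]_m.
Hypothesis Pv : P v.

Definition feasible_dir d := exists2 e : R, 0 < e & P (v + e *: d).

Lemma feasible_dir_shrink d e1 e : P (v + e1 *: d) -> 0 < e1 -> 0 <= e -> e <= e1 ->
  P (v + e *: d).
Proof.
move=> H1 he1 he0 hee.
have le1 : e / e1 <= 1 by rewrite ler_pdivrMr // mul1r.
have := convP H1 Pv (divr_ge0 he0 (ltW he1)) le1.
congr P; apply/rowP => k; rewrite !mxE; field; exact: lt0r_neq0.
Qed.

Lemma feasible_dir_common d1 d2 : feasible_dir d1 -> feasible_dir d2 ->
  exists2 e : R, 0 < e & P (v + e *: d1) /\ P (v + e *: d2).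
Proof.
move=> [e1 he1 H1] [e2 he2 H2].
have [le12|/ltW le21] := lerP e1 e2.
  by exists e1 => //; split => //; apply: feasible_dir_shrink H2 _ _ le12 => //; exact: ltW.
by exists e2 => //; split => //; apply: feasible_dir_shrink H1 _ _ le21 => //; exact: ltW.
Qed.

Lemma feasible_dir0 : feasible_dir 0.
Proof. by exists 1; rewrite ?scaler0 ?addr0. Qed.

Lemma feasible_dirD d1 d2 : feasible_dir d1 -> feasible_dir d2 -> feasible_dir (d1 + d2).
Proof.
move=> /feasible_dir_common /[apply] -[e he [P1 P2]]; exists (e / 2).
  exact: divr_gt0.
have half_ge0 : (0 : R) <= 1 / 2 by lra.
have half_le1 : (1 : R) / 2 <= 1 by lra.
have := convP P1 P2 half_ge0 half_le1; congr P.
by apply/rowP => k; rewrite !mxE; field.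
Qed.

Lemma feasible_dirZ c d : 0 < c -> feasible_dir d -> feasible_dir (c *: d).
Proof.
move=> hc [e he H]; exists (e / c); first exact: divr_gt0.
by rewrite scalerA divfK ?lt0r_neq0.
Qed.

Lemma vertex_feasible_dir_opp d : is_vertex P v ->
  feasible_dir d -> feasible_dir (- d) -> d = 0.
Proof.
move=> [_ Hext] /feasible_dir_common /[apply] -[e he [P1 P2]].
have mid : v = 1 / 2 *: (v + e *: d) + (1 - 1 / 2) *: (v + e *: - d).
  by apply/rowP => k; rewrite !mxE; field.
have half_gt0 : (0 : R) < 1 / 2 by lra.
have half_lt1 : (1 : R) / 2 < 1 by lra.
have [/eqP] := Hext _ _ _ P1 P2 half_gt0 half_lt1 mid.
by rewrite addrC -subr_eq0 addrK scaler_eq0 (gt_eqF he) => /eqP.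
Qed.

End ConvexCone.

Section NewtonPolyhedron.
Variables (R : realType) (K : fieldType) (val : K -> int) (n : nat).
Implicit Types (f : {mpoly K[n]}) (w : 'I_n -> rat) (z : 'rV[R]_n.+1).
Local Notation NP := (@newton_polyhedron R K val n).
Local Notation e0 := (e0 R n).

Definition exp_point f (a : 'X_{1..n}) : 'rV[R]_n.+1 := term_point R val (f@_a, a).

Lemma exp_point0 f a : exp_point f a 0 ord0 = (val f@_a)%:~R.
Proof. by rewrite /exp_point /term_point mxE unlift_none. Qed.

Lemma exp_pointS f a j : exp_point f a 0 (lift ord0 j) = (a j)%:R.
Proof. by rewrite /exp_point /term_point mxE liftK. Qed.

Lemma e0S j : e0 0 (lift ord0 j) = 0.
Proof. by rewrite /e0 mxE eq_sym (negbTE (neq_lift _ _)). Qed.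

Definition val_form w z : R :=
  z 0 ord0 - \sum_(j < n) ratr (w j) * z 0 (lift ord0 j).

Lemma val_formD w z1 z2 : val_form w (z1 + z2) = val_form w z1 + val_form w z2.
Proof.
rewrite /val_form !mxE addrACA -opprD -big_split /=; congr (_ - _).
by apply: eq_bigr => j _; rewrite mxE mulrDr.
Qed.

Lemma val_formZ w c z : val_form w (c *: z) = c * val_form w z.
Proof.
rewrite /val_form !mxE mulrBr mulr_sumr; congr (_ - _).
by apply: eq_bigr => j _; rewrite mxE mulrCA.
Qed.

Lemma val_form_sum w (I : Type) (r : seq I) (P : pred I) (G : I -> 'rV[R]_n.+1) :
  val_form w (\sum_(i <- r | P i) G i) = \sum_(i <- r | P i) val_form w (G i).
Proof.
apply: (big_morph _ (val_formD w)).
by rewrite -(scale0r (0 : 'rV[R]_n.+1)) val_formZ mul0r.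
Qed.

Lemma val_form_exp_point w f a : val_form w (exp_point f a) = ratr (val_r val w (f@_a, a)).
Proof.
rewrite /val_form exp_point0 /val_r rmorphB /= ratr_int rmorph_sum; congr (_ - _).
by apply: eq_bigr => j _; rewrite exp_pointS rmorphM /= ratr_nat.
Qed.

Lemma val_form_e0 w : val_form w e0 = 1.
Proof. by rewrite /val_form mxE eqxx big1 ?subr0 // => j _; rewrite e0S mulr0. Qed.

Lemma sum_indicator (V : lmodType R) (r : seq 'X_{1..n}) a (c : R) (G : 'X_{1..n} -> V) :
  uniq r -> a \in r -> \sum_(b <- r) ((b == a)%:R * c) *: G b = c *: G a.
Proof.
move=> u ha; rewrite (bigD1_seq a) //= eqxx mul1r big1 ?addr0 //.
by move=> b /negbTE ->; rewrite mul0r scale0r.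
Qed.

Lemma exp_point_NP f a : a \in msupp f -> NP f (exp_point f a).
Proof.
move=> ha; exists (fun b => (b == a)%:R * 1), 0; split.
- by move=> b _; rewrite mulr1 ler0n.
- rewrite (bigD1_seq a) ?msupp_uniq //= eqxx mulr1 big1 ?addr0 // => b.
  by move/negbTE ->; rewrite mul0r.
- by [].
- by rewrite sum_indicator ?msupp_uniq // scale1r scale0r addr0.
Qed.

Lemma NP_convex f : convex_set (NP f).
Proof.
rewrite /convex_set => x y t [l1 [u1 [Hl1 Hs1 Hu1 ->]]] [l2 [u2 [Hl2 Hs2 Hu2 ->]]] t0 t1.
have t1' : 0 <= 1 - t by rewrite subr_ge0.
exists (fun b => t * l1 b + (1 - t) * l2 b), (t * u1 + (1 - t) * u2); split.
- by move=> b hb; rewrite addr_ge0 ?mulr_ge0 ?Hl1 ?Hl2.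
- by rewrite big_split /= -!mulr_sumr Hs1 Hs2; ring.
- by rewrite addr_ge0 ?mulr_ge0.
- rewrite !scalerDr !scaler_sumr addrACA -big_split /= !scalerA -scalerDl.
  by congr (_ + _); apply: eq_bigr => b _; rewrite !scalerA -scalerDl.
Qed.

Lemma NP_add_e0 f z c : NP f z -> 0 <= c -> NP f (z + c *: e0).
Proof.
move=> [l [u [Hl Hs Hu ->]]] hc; exists l, (u + c); split => //.
  exact: addr_ge0.
by rewrite -addrA -scalerDl.
Qed.

Lemma val_form_NP_excess w f a (lam : 'X_{1..n} -> R) u :
  \sum_(b <- msupp f) lam b = 1 ->
  val_form w (\sum_(b <- msupp f) lam b *: exp_point f b + u *: e0) - val_form w (exp_point f a)
  = \sum_(b <- msupp f) lam b * (val_form w (exp_point f b) - val_form w (exp_point f a)) + u.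
Proof.
move=> Hs; rewrite val_formD val_formZ val_form_e0 mulr1 val_form_sum.
rewrite -[X in _ - X]mul1r -Hs mulr_suml addrAC -sumrB.
by congr (_ + _); apply: eq_bigr => b _; rewrite val_formZ; ring.
Qed.

Section StrictMinimum.
Variables (w : 'I_n -> rat) (f : {mpoly K[n]}) (a : 'X_{1..n}).
Hypothesis ha : a \in msupp f.
Hypothesis a_min : forall b, b \in msupp f -> b != a ->
  val_r val w (f@_a, a) < val_r val w (f@_b, b).

Lemma val_form_excess_ge0 b : b \in msupp f ->
  0 <= val_form w (exp_point f b) - val_form w (exp_point f a).
Proof.
move=> hb; rewrite subr_ge0 !val_form_exp_point ler_rat.
by have [->//|nb] := eqVneq b a; apply/ltW/a_min.
Qed.

Lemma NP_val_form_ge z : NP f z -> val_form w (exp_point f a) <= val_form w z.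
Proof.
move=> [lam [u [Hl Hs Hu ->]]]; rewrite -subr_ge0 val_form_NP_excess //.
rewrite addr_ge0 // big_seq sumr_ge0 // => b hb.
by rewrite mulr_ge0 ?Hl ?val_form_excess_ge0.
Qed.

Lemma NP_val_form_eq z : NP f z -> val_form w z = val_form w (exp_point f a) ->
  z = exp_point f a.
Proof.
move=> [lam [u [Hl Hs Hu ->]]] /eqP; rewrite -subr_eq0 val_form_NP_excess //.
have Hterm b : b \in msupp f ->
    0 <= lam b * (val_form w (exp_point f b) - val_form w (exp_point f a)).
  by move=> hb; rewrite mulr_ge0 ?Hl ?val_form_excess_ge0.
rewrite paddr_eq0 //; last by rewrite big_seq sumr_ge0.
rewrite big_seq psumr_eq0 // => /andP[/allP Hz /eqP ->].
have lam0 b : b \in msupp f -> b != a -> lam b = 0.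
  move=> hb nb; have := Hz b hb; rewrite hb /= mulf_eq0 subr_eq0 => /orP[/eqP //|].
  by rewrite !val_form_exp_point => /eqP/fmorph_inj E; have := a_min hb nb; rewrite E ltxx.
have lam1 : lam a = 1.
  rewrite -Hs (bigD1_seq a) ?msupp_uniq //= big_seq_cond big1 ?addr0 //.
  by move=> b /andP[hb nb]; apply: lam0.
rewrite scale0r addr0 (bigD1_seq a) ?msupp_uniq //= big_seq_cond big1 ?addr0.
  by rewrite lam1 scale1r.
by move=> b /andP[hb nb]; rewrite lam0 // scale0r.
Qed.

End StrictMinimum.

Lemma vertex_of_val_form_min w (P : 'rV[R]_n.+1 -> Prop) v : P v ->
  (forall x, P x -> val_form w v <= val_form w x) ->
  (forall x, P x -> val_form w x = val_form w v -> x = v) -> is_vertex P v.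
Proof.
move=> Pv Hge Heq; split => // x y t Px Py t0 t1 E.
have := Hge x Px; have := Hge y Py.
have : val_form w v = t * val_form w x + (1 - t) * val_form w y.
  by rewrite {1}E val_formD !val_formZ.
by move=> Ev hy hx; split; apply: Heq => //; nra.
Qed.

End NewtonPolyhedron.

Section MinkowskiSum.
Variables (R : realType) (K : fieldType) (val : K -> int) (n s : nat).
Variable F : 'I_s -> {mpoly K[n]}.
Local Notation NP := (@newton_polyhedron R K val n).
Local Notation NF := (@newton_polyhedron_fam R K val n s F).
Local Notation exp_point := (@exp_point R K val n).
Local Notation e0 := (e0 R n).

Definition vsum (a : 'I_s -> 'X_{1..n}) := \sum_(i < s) exp_point (F i) (a i).

Lemma NF_convex : convex_set NF.
Proof.
move=> _ _ t [y1 [H1 ->]] [y2 [H2 ->]] t0 t1.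
exists (fun i => t *: y1 i + (1 - t) *: y2 i); split.
  by move=> i; exact: NP_convex.
by rewrite !scaler_sumr -big_split.
Qed.

Lemma NF_replace (y : 'I_s -> 'rV[R]_n.+1) i0 p :
  (forall i, NP (F i) (y i)) -> NP (F i0) p -> NF (\sum_(i < s) y i + (p - y i0)).
Proof.
move=> Hy Hp; exists (fun i => if i == i0 then p else y i); split.
  by move=> i; case: eqP => [->|_]; [exact: Hp | exact: Hy].
rewrite (bigD1 i0) //= [in RHS](bigD1 i0) //= eqxx addrAC [y i0 + _]addrC subrK.
by congr (_ + _); apply: eq_bigr => i /negbTE ->.
Qed.

Lemma vsum_NF a : (forall i, a i \in msupp (F i)) -> NF (vsum a).
Proof.
by move=> Ha; exists (fun i => exp_point (F i) (a i)); split => // i; exact: exp_point_NP.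
Qed.

Lemma NF_vertex_of_strict_min a w : (forall i, a i \in msupp (F i)) ->
  (forall i b, b \in msupp (F i) -> b != a i ->
     val_r val w ((F i)@_(a i), a i) < val_r val w ((F i)@_b, b)) ->
  is_vertex NF (vsum a).
Proof.
move=> Ha Hs; apply: (vertex_of_val_form_min (w := w)); first exact: vsum_NF.
  move=> _ [y [Hy ->]]; rewrite /vsum !val_form_sum; apply: ler_sum => i _.
  exact: (NP_val_form_ge (R := R) (Hs i) (Hy i)).
move=> _ [y [Hy ->]]; rewrite /vsum !val_form_sum => /eqP; rewrite -subr_eq0 -sumrB.
rewrite psumr_eq0 => [/allP Heq|i _]; last by rewrite subr_ge0 (NP_val_form_ge (Hs i) (Hy i)).
apply: eq_bigr => i _; apply: (NP_val_form_eq (Ha i) (Hs i) (Hy i)).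
by apply/eqP; rewrite -subr_eq0; apply: Heq; rewrite mem_index_enum.
Qed.

Lemma NF_vertex_summand (y : 'I_s -> 'rV[R]_n.+1) i0 :
  (forall i, NP (F i) (y i)) -> is_vertex NF (\sum_(i < s) y i) -> is_vertex (NP (F i0)) (y i0).
Proof.
move=> Hy [_ Hext]; split => // p q t Hp Hq t0 t1 E.
have := Hext _ _ _ (NF_replace Hy Hp) (NF_replace Hy Hq) t0 t1.
have mid : \sum_(i < s) y i = t *: (\sum_(i < s) y i + (p - y i0)) +
    (1 - t) *: (\sum_(i < s) y i + (q - y i0)).
  rewrite !scalerDr addrACA -scalerDl subrKC scale1r -[LHS]addr0; congr (_ + _).
  by rewrite !scalerN addrACA -opprD -scalerDl subrKC scale1r E subrr.
move=> /(_ mid) [Ep Eq].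
by split; apply/subr0_eq/(addrI (\sum_(i < s) y i)); rewrite addr0.
Qed.

Lemma NP_split_point f (lam : 'X_{1..n} -> R) u a :
  (forall b, b \in msupp f -> 0 <= lam b) -> \sum_(b <- msupp f) lam b = 1 -> 0 <= u ->
  a \in msupp f -> 0 < lam a ->
  exists t, [/\ 0 < t, t < 1 & exists2 q, NP f q &
    \sum_(b <- msupp f) lam b *: exp_point f b + u *: e0 = t *: exp_point f a + (1 - t) *: q].
Proof.
move=> Hl Hs Hu ha la.
have la1 : lam a <= 1.
  rewrite -Hs (bigD1_seq a) ?msupp_uniq //= lerDl big_seq_cond sumr_ge0 // => b /andP[hb _].
  exact: Hl.
pose t := lam a / 2; exists t; split; [rewrite /t; lra | rewrite /t; lra |].
have t1 : 1 - t != 0 by rewrite subr_eq0 eq_sym lt_eqF // /t; lra.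
pose lam' b := (lam b - (b == a)%:R * t) / (1 - t).
exists (\sum_(b <- msupp f) lam' b *: exp_point f b + (u / (1 - t)) *: e0).
  exists lam', (u / (1 - t)); split => //.
  - move=> b hb; apply: divr_ge0; last by rewrite /t; lra.
    by have := Hl b hb; case: eqP => [->|_]; rewrite /t /= ?mul1r ?mul0r ?subr0 => H; lra.
  - rewrite /lam' -mulr_suml sumrB Hs.
    rewrite (bigD1_seq a) ?msupp_uniq //= eqxx mul1r big1 ?addr0 ?divff //.
    by move=> b /negbTE ->; rewrite mul0r.
  - by apply: divr_ge0 => //; rewrite /t; lra.
rewrite scalerDr scaler_sumr scalerA mulrC divfK // addrA; congr (_ + _).
under [in RHS]eq_bigr do rewrite scalerA mulrC divfK // scalerBl.
by rewrite sumrB sum_indicator ?msupp_uniq // addrC subrK.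
Qed.

Lemma NP_vertex_point f z : is_vertex (NP f) z -> exists2 a, a \in msupp f & z = exp_point f a.
Proof.
move=> [[lam [u [Hl Hs Hu Ez]]] Hext].
have [a ha la] : exists2 a, a \in msupp f & 0 < lam a.
  apply: Classical_Prop.NNPP => H; move: Hs; apply/eqP; rewrite lt_eqF //.
  rewrite big_seq (le_lt_trans _ ltr01) // sumr_le0 // => b hb.
  by rewrite leNgt; apply/negP => lb; apply: H; exists b.
have [t [t0 t1 [q Hq]]] := NP_split_point Hl Hs Hu ha la; rewrite -Ez => E.
by have [<- _] := Hext _ _ _ (exp_point_NP R val ha) Hq t0 t1 E; exists a.
Qed.

Lemma NF_vertex_vsum v : is_vertex NF v ->
  exists a, (forall i, a i \in msupp (F i)) /\ v = vsum a.
Proof.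
move=> Hv; have [[y [Hy Ev]] _] := Hv; rewrite Ev in Hv.
have Hpt i : exists a, a \in msupp (F i) /\ y i = exp_point (F i) a.
  by have [a ha ->] := NP_vertex_point (NF_vertex_summand i Hy Hv); exists a.
have /fin_all_exists [a Ha] := Hpt.
exists a; split => [i|]; first by case: (Ha i).
by rewrite Ev /vsum; apply: eq_bigr => i _; case: (Ha i).
Qed.

End MinkowskiSum.

Section MonomialOrderWeight.
Variables (n : nat) (le : rel 'X_{1..n}).
Hypothesis Hle : monomial_order le.

Definition strict_exp_diff (h : 'I_n -> rat) := exists2 N : nat, (0 < N)%N &
  exists A B, [/\ le B A, B != A & forall j, N%:R * h j = (A j)%:R - (B j)%:R].

Lemma strict_exp_diffD h1 h2 : strict_exp_diff h1 -> strict_exp_diff h2 ->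
  strict_exp_diff (fun j => h1 j + h2 j).
Proof.
move=> [N1 N1p [A1 [B1 [l1 n1 E1]]]] [N2 N2p [A2 [B2 [l2 n2 E2]]]].
exists (N1 * N2)%N; first by rewrite muln_gt0 N1p N2p.
exists (mnm_add (mnm_muln A1 N2) (mnm_muln A2 N1)), (mnm_add (mnm_muln B1 N2) (mnm_muln B2 N1)).
have [s1 t1] := mo_muln Hle N2p l1 n1; have [s2 t2] := mo_muln Hle N1p l2 n2.
have Hadd := mo_add Hle s1 s2; have Hneq := mo_add_neq Hle s1 t1 s2.
split => [||j]; [exact: Hadd | exact: Hneq |].
rewrite !mnmDE !mulmnE !natrD !natrM.
transitivity (N2%:R * (N1%:R * h1 j) + N1%:R * (N2%:R * h2 j)); first ring.
by rewrite E1 E2; ring.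
Qed.

Lemma strict_exp_diffZ c h : 0 < c -> strict_exp_diff h -> strict_exp_diff (fun j => c * h j).
Proof.
move=> hc [N Np [A [B [l nab E]]]].
have [p pp [q qp Ec]] : exists2 p : nat, (0 < p)%N & exists2 q : nat, (0 < q)%N & c = p%:R / q%:R.
  exists `|numq c|%N; first by rewrite absz_gt0 gt_eqF // numq_gt0.
  exists `|denq c|%N; first by rewrite absz_gt0 gt_eqF.
  by rewrite !natr_absz !gtr0_norm ?numq_gt0 // divq_num_den.
exists (N * q)%N; first by rewrite muln_gt0 Np qp.
exists (mnm_muln A p), (mnm_muln B p).
have [sc tc] := mo_muln Hle pp l nab; split => // j.
have qn : (q%:R : rat) != 0 by rewrite pnatr_eq0 -lt0n.
rewrite !mulmnE !natrM Ec.
transitivity (p%:R * (N%:R * h j) * (q%:R / q%:R)); first ring.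
by rewrite divff // mulr1 E; ring.
Qed.

Lemma strict_exp_diff_neq0 h : strict_exp_diff h -> exists j, h j != 0.
Proof.
move=> [N _ [A [B [_ nab E]]]]; apply: Classical_Prop.NNPP => H.
have h0 j : h j = 0 by apply/eqP; apply: contraT => hj; case: H; exists j.
move: nab; suff -> : B = A by rewrite eqxx.
by apply/mnmP => j; have /eqP := E j; rewrite h0 mulr0 eq_sym subr_eq0 eqr_nat => /eqP.
Qed.

(* On finitely many monomials a monomial order is realised by a weight. *)
Lemma monomial_order_feasible (cs : seq (constr rat n)) :
  (forall g h, List.In (g, h) cs -> 0 <= g /\ (g = 0 -> strict_exp_diff h)) ->
  exists w, feasible cs w.
Proof.
move=> Hcs; case: (motzkin_transposition cs) => // -[g [h [Hd Hh Hg]]].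
suff [g0 Hdir] : 0 <= g /\ (g = 0 -> strict_exp_diff h).
  have [j] := strict_exp_diff_neq0 (Hdir (le_anti (introT andP (conj Hg g0)))).
  by rewrite Hh eqxx.
elim: Hd {Hh Hg} => {g h} [g h /Hcs //| g1 h1 g2 h2 _ [g1p I1] _ [g2p I2]|c g h hc _ [gp I]|].
- split; first exact: addr_ge0.
  move=> g12; apply: strict_exp_diffD; [apply: I1 | apply: I2]; lra.
- split; first by rewrite mulr_ge0 // ltW.
  by move=> /eqP; rewrite mulf_eq0 gt_eqF //= => /eqP /I; apply: strict_exp_diffZ.
- move=> g h h' _ [gp I] E; split => // /I [N Np [A [B [l nab E2]]]].
  by exists N => //; exists A, B; split => // j; rewrite -E.
Qed.

End MonomialOrderWeight.

Section VertexWeight.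
Variables (R : realType) (n : nat) (P : 'rV[R]_n.+1 -> Prop) (v : 'rV[R]_n.+1).
Hypotheses (convP : convex_set P) (Pv : P v) (vertex_v : is_vertex P v).
Local Notation e0 := (e0 R n).

Definition constr_row (g : rat) (h : 'I_n -> rat) : 'rV[R]_n.+1 :=
  \row_k (if unlift ord0 k is Some j then - ratr (h j) else ratr g).

Lemma constr_rowD g1 h1 g2 h2 :
  constr_row (g1 + g2) (fun j => h1 j + h2 j) = constr_row g1 h1 + constr_row g2 h2.
Proof. by apply/rowP => k; rewrite !mxE; case: unlift => [j|]; rewrite rmorphD //= opprD. Qed.

Lemma constr_rowZ a g h : constr_row (a * g) (fun j => a * h j) = ratr a *: constr_row g h.
Proof. by apply/rowP => k; rewrite !mxE; case: unlift => [j|]; rewrite rmorphM //= mulrN. Qed.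

Lemma constr_row_ext g h h' : (forall j, h j = h' j) -> constr_row g h = constr_row g h'.
Proof. by move=> E; apply/rowP => k; rewrite !mxE; case: unlift => [j|]; rewrite ?E. Qed.

Lemma constr_row_const g h : (forall j, h j = 0) -> constr_row g h = ratr g *: e0.
Proof.
move=> E; apply/rowP => k; rewrite !mxE.
case: unliftP => [j ->|->]; last by rewrite eqxx mulr1.
by rewrite E rmorph0 oppr0 eq_sym (negbTE (neq_lift _ _)) mulr0.
Qed.

Lemma e0_neq0 : e0 != 0.
Proof. by apply/eqP => /rowP /(_ ord0); rewrite !mxE eqxx => /eqP; rewrite oner_eq0. Qed.

(* At a vertex the feasible directions form a pointed cone, so a sum of
   nonzero feasible directions stays nonzero; the vertical direction [e0] then
   rules out [(g, 0)] with [g <= 0] in the cone of the constraints. *)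
Lemma vertex_feasible (cs : seq (constr rat n)) : feasible_dir P v e0 ->
  (forall g h, List.In (g, h) cs -> constr_row g h != 0 /\ feasible_dir P v (constr_row g h)) ->
  exists w, feasible cs w.
Proof.
move=> Fe0 Hcs; case: (motzkin_transposition cs) => // -[g [h [Hd Hh Hg]]].
have opp0 := vertex_feasible_dir_opp convP Pv vertex_v.
suff [nz Fd] : constr_row g h != 0 /\ feasible_dir P v (constr_row g h).
  move: nz Fd; rewrite (constr_row_const g Hh) scaler_eq0 negb_or fmorph_eq0 => /andP[g0 _] Fd.
  have gn : 0 < - g by rewrite oppr_gt0 lt_neqAle g0.
  have Fme0 : feasible_dir P v (- e0).
    have c_gt0 : 0 < (ratr (- g) : R)^-1 by rewrite invr_gt0 ltr0q.
    have := feasible_dirZ c_gt0 Fd.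
    by rewrite scalerA rmorphN invrN mulNr mulVf ?fmorph_eq0 // scaleN1r.
  by case/eqP: e0_neq0; apply: opp0.
elim: Hd {Hh Hg} => {g h} [g h /Hcs //| g1 h1 g2 h2 _ [n1 F1] _ [n2 F2]|c g h hc _ [nd Fd]|].
- rewrite constr_rowD; split; last exact: feasible_dirD.
  apply: contra n1; rewrite addr_eq0 => /eqP E; apply/eqP/opp0 => //.
  by rewrite E opprK.
- rewrite constr_rowZ scaler_eq0 negb_or nd fmorph_eq0 gt_eqF //; split => //.
  by apply: feasible_dirZ => //; rewrite ltr0q.
- by move=> g h h' _ [nd Fd] E; rewrite -(constr_row_ext g E).
Qed.

End VertexWeight.

Lemma In_mem (T : eqType) (x : T) (l : seq T) : List.In x l <-> x \in l.
Proof.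
elim: l => [//|y l IH] /=; rewrite inE; split.
  by case=> [->|/IH ->]; rewrite ?eqxx ?orbT.
by case/orP => [/eqP ->|/IH]; [left | right].
Qed.

Section ExponentConstraints.
Variables (K : fieldType) (val : K -> int) (n s : nat) (F : 'I_s -> {mpoly K[n]}).
Implicit Types (r : 'I_n -> rat) (a : 'I_s -> 'X_{1..n}).

Definition exp_constr r a i (b : 'X_{1..n}) : constr rat n :=
  (val_r val r ((F i)@_b, b) - val_r val r ((F i)@_(a i), a i),
   fun j => (a i j)%:R - (b j)%:R).

Definition exp_constrs r a : seq (constr rat n) :=
  List.flat_map (fun i => List.map (exp_constr r a i)
     (List.filter (fun b => b != a i) (msupp (F i)))) (enum 'I_s).

Lemma exp_constrsP r a g h : List.In (g, h) (exp_constrs r a) ->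
  exists i b, [/\ b \in msupp (F i), b != a i & (g, h) = exp_constr r a i b].
Proof.
move=> /List.in_flat_map [i [_ /List.in_map_iff [b [<- /List.filter_In [/In_mem hb nb]]]]].
by exists i, b.
Qed.

Lemma exp_constrs_feasible r a w : feasible (exp_constrs r a) w ->
  forall i b, b \in msupp (F i) -> b != a i ->
  val_r val (fun j => r j + w j) ((F i)@_(a i), a i) <
  val_r val (fun j => r j + w j) ((F i)@_b, b).
Proof.
move=> H i b hb nb.
have /H : List.In (exp_constr r a i b) (exp_constrs r a).
  apply/List.in_flat_map; exists i; split; first by apply/In_mem; rewrite mem_enum.
  by apply/List.in_map/List.filter_In; split => //; apply/In_mem.
have val_rD t : val_r val (fun j => r j + w j) t = val_r val r t - dotp w (fun j => (t.2 j)%:R).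
  by rewrite /val_r /dotp -addrA -opprD -big_split /=; congr (_ - _); apply: eq_bigr => j _; ring.
rewrite !val_rD /= (_ : dotp w _ = dotp w (fun j => (a i j)%:R) - dotp w (fun j => (b j)%:R)).
  by move=> H'; lra.
by rewrite /dotp -sumrB; apply: eq_bigr => j _; ring.
Qed.

Lemma lead_exps_strict_weight r le : monomial_order le -> (forall i, F i != 0) ->
  exists w, forall i b, b \in msupp (F i) -> b != lead_exp val r le (F i) ->
    val_r val w ((F i)@_(lead_exp val r le (F i)), lead_exp val r le (F i)) <
    val_r val w ((F i)@_b, b).
Proof.
move=> Hle HF; pose a i := lead_exp val r le (F i).
have [|w Hw] := @monomial_order_feasible n le Hle (exp_constrs r a).
  move=> g h /exp_constrsP [i [b [hb nb [-> ->]]]].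
  have [_ /(_ b hb nb)] := lead_expP val r Hle (HF i).
  case=> [lt|[eq [lb _]]]; rewrite subr_ge0.
    by split; [exact: ltW | move/eqP; rewrite subr_eq0 => /eqP E; move: lt; rewrite E ltxx].
  rewrite eq lexx; split => // _; exists 1%N => //.
  by exists (a i), b; split => // j; rewrite mul1r.
by exists (fun j => r j + w j); apply: exp_constrs_feasible.
Qed.

End ExponentConstraints.

Section VertexLeadingExponents.
Variables (R : realType) (K : fieldType) (val : K -> int) (n s : nat).
Variable F : 'I_s -> {mpoly K[n]}.
Local Notation NF := (@newton_polyhedron_fam R K val n s F).
Local Notation exp_point := (@exp_point R K val n).
Local Notation vsum := (@vsum R K val n s F).

Lemma constr_row_exp_constr a i b :
  constr_row R (exp_constr val F (fun=> 0) a i b).1 (exp_constr val F (fun=> 0) a i b).2 =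
  exp_point (F i) b - exp_point (F i) (a i).
Proof.
have val_r0 (t : term K n) : val_r val (fun=> 0) t = (val t.1)%:~R.
  by rewrite /val_r big1 ?subr0 // => j _; rewrite mul0r.
apply/rowP => k; rewrite !mxE; case: unliftP => [j _|_] /=.
  by rewrite rmorphB /= !ratr_nat opprB.
by rewrite !val_r0 rmorphB /= !ratr_int.
Qed.

Lemma NF_vertex_strict_weight a : is_vertex NF (vsum a) -> (forall i, a i \in msupp (F i)) ->
  exists w, forall i b, b \in msupp (F i) -> b != a i ->
     val_r val w ((F i)@_(a i), a i) < val_r val w ((F i)@_b, b).
Proof.
move=> Hv Ha; have NFv : NF (vsum a) by case: Hv.
case: (pickP (@predT (ordinal s))) => [i0 _|no_i]; last first.
  by exists (fun=> 0) => i; have := no_i i.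
have Hy i : newton_polyhedron val (F i) (exp_point (F i) (a i)) by exact: exp_point_NP.
have Fe0 : feasible_dir NF (vsum a) (e0 R n).
  exists 1 => //; rewrite scale1r.
  have -> : vsum a + e0 R n =
      vsum a + ((exp_point (F i0) (a i0) + 1 *: e0 R n) - exp_point (F i0) (a i0)).
    by rewrite scale1r addrAC subrr add0r.
  by apply: NF_replace => //; apply: NP_add_e0.
have [|w Hw] := vertex_feasible (@NF_convex R K val n s F) NFv Hv Fe0
  (cs := exp_constrs val F (fun=> 0) a).
  move=> g h /exp_constrsP [i [b [hb nb [-> ->]]]]; rewrite constr_row_exp_constr; split.
    rewrite subr_eq0; apply: contra nb => /eqP E; apply/eqP/mnmP => j.
    have := congr1 (fun z : 'rV[R]_n.+1 => z 0 (lift ord0 j)) E.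
    by rewrite /= !exp_pointS => /eqP; rewrite eqr_nat => /eqP.
  exists 1 => //; rewrite scale1r.
  by apply: (NF_replace (y := fun i => exp_point (F i) (a i))) => //; exact: exp_point_NP.
by exists (fun j => 0 + w j); apply: exp_constrs_feasible.
Qed.

End VertexLeadingExponents.

Section LeadingExponentsInjective.
Variables (R : realType) (K : fieldType) (val : K -> int) (n s : nat).
Variable F : 'I_s -> {mpoly K[n]}.
Variables (r : 'I_n -> rat) (le : rel 'X_{1..n}).
Hypothesis Hle : monomial_order le.
Local Notation vsum := (@vsum R K val n s F).
Local Notation val_rF a i := (val_r val r ((F i)@_(a i), a i)).

Lemma val_form_vsum a : val_form r (vsum a) = ratr (\sum_(i < s) val_rF a i).
Proof. by rewrite val_form_sum rmorph_sum; apply: eq_bigr => i _; rewrite val_form_exp_point. Qed.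

Lemma vsum_exp a j : vsum a 0 (lift ord0 j) = ((\big[mnm_add/mnm0]_(i < s) a i) j)%:R.
Proof. by rewrite summxE mnm_sumE natr_sum; apply: eq_bigr => i _; rewrite exp_pointS. Qed.

(* Equal sums of [val_r] force each leading term to tie with the competing
   term, and then the monomial order, being compatible with addition, forbids
   equal exponent sums. *)
Lemma lead_exps_vsum_inj (a1 a2 : 'I_s -> 'X_{1..n}) :
  (forall i, is_lead_exp val r le (F i) (a1 i)) -> (forall i, a2 i \in msupp (F i)) ->
  vsum a1 = vsum a2 -> forall i, a1 i = a2 i.
Proof.
move=> H1 H2 E.
have Hge i : val_rF a1 i <= val_rF a2 i.
  have [->//|ne] := eqVneq (a2 i) (a1 i).
  by case: (proj2 (H1 i) _ (H2 i) ne) => [/ltW|[->]].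
have Heq i : val_rF a1 i = val_rF a2 i.
  have /fmorph_inj Esum : ratr (\sum_(i < s) val_rF a2 i) = ratr (\sum_(i < s) val_rF a1 i) :> R.
    by rewrite -!val_form_vsum E.
  have /eqP : \sum_(i < s) (val_rF a2 i - val_rF a1 i) = 0 by rewrite sumrB Esum subrr.
  rewrite psumr_eq0 => [/allP /(_ i (mem_index_enum i)) /=|j _]; last by rewrite subr_ge0.
  by rewrite subr_eq0 => /eqP.
have Hle21 i : le (a2 i) (a1 i).
  have [->|ne] := eqVneq (a2 i) (a1 i); first exact: mo_refl.
  by case: (proj2 (H1 i) _ (H2 i) ne) => [|[_ []]//]; rewrite Heq ltxx.
move=> i; apply/eqP; apply: contraT => ne.
have Hhas : has (fun i => a2 i != a1 i) (index_enum 'I_s).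
  by apply/hasP; exists i; rewrite ?mem_index_enum // eq_sym.
suff Esum : \big[mnm_add/mnm0]_(i < s) a2 i = \big[mnm_add/mnm0]_(i < s) a1 i.
  by have := mo_big_add Hle Hle21 Hhas; rewrite Esum eqxx.
by apply/mnmP => j; apply/eqP; rewrite -(eqr_nat R) -!vsum_exp E.
Qed.

End LeadingExponentsInjective.

Lemma equiv_wrt_lead_exp (K : fieldType) (val : K -> int) (n s : nat)
    (F : 'I_s -> {mpoly K[n]}) r1 le1 r2 le2 :
  monomial_order le1 -> monomial_order le2 -> (forall i, F i != 0) ->
  equiv_wrt val F r1 le1 r2 le2 <->
  forall i, lead_exp val r1 le1 (F i) = lead_exp val r2 le2 (F i).
Proof.
move=> H1 H2 HF; have L1 i := lead_expP val r1 H1 (HF i); have L2 i := lead_expP val r2 H2 (HF i).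
split => [Heq i | E i t].
  by have [_ ->] := LT_lead_exp H2 (L2 i) (proj1 (Heq i _) (lead_exp_LT (L1 i))).
split => [/(LT_lead_exp H1 (L1 i)) ->|/(LT_lead_exp H2 (L2 i)) ->].
  by rewrite E; apply: lead_exp_LT.
by rewrite -E; apply: lead_exp_LT.
Qed.

(* The valuation axioms and the completeness of [K] play no role: only the
   values of [val] at the coefficients of the [F i] enter. *)
Theorem mainTheorem5 (R : realType) (K : fieldType) (val : K -> int)
  (hval : discrete_valuation val) (hcomplete : val_complete val)
  (n s : nat) (F : 'I_s -> {mpoly K[n]}) (hF : forall i, F i != 0) :
  exists phi : ('I_n -> rat) -> rel 'X_{1..n} -> 'rV[R]_n.+1,
    [/\ (forall r le, monomial_order le ->
           is_vertex (@newton_polyhedron_fam R K val n s F) (phi r le)),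
        (forall v, is_vertex (@newton_polyhedron_fam R K val n s F) v ->
           exists r le, monomial_order le /\ phi r le = v)
      & (forall r1 le1 r2 le2, monomial_order le1 -> monomial_order le2 ->
           (phi r1 le1 = phi r2 le2 <-> equiv_wrt val F r1 le1 r2 le2))].
Proof.
pose lead_exps r le i := lead_exp val r le (F i).
have leadP r le i : monomial_order le -> is_lead_exp val r le (F i) (lead_exps r le i).
  by move=> Hle; apply: lead_expP.
exists (fun r le => vsum R val F (lead_exps r le)); split.
- move=> r le Hle; have [w Hw] := lead_exps_strict_weight val r Hle hF.
  by apply: (NF_vertex_of_strict_min R (w := w)) => // i; case: (leadP r le i Hle).
- move=> v Hv; have [a [Ha Ev]] := NF_vertex_vsum Hv; rewrite Ev in Hv.
  have [w Hw] := NF_vertex_strict_weight Hv Ha.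
  pose mnmc := fun a b : 'X_{1..n} => (a <= b)%O.
  have Hmnmc : monomial_order mnmc by apply: mnmc_monomial_order.
  exists w, mnmc; split => //; rewrite Ev /vsum; apply: eq_bigr => i _.
  suff -> : lead_exps w mnmc i = a i by [].
  apply: (lead_exp_unique Hmnmc (leadP w mnmc i Hmnmc)).
  by apply: strict_min_lead_exp; [exact: Ha | exact: Hw].
- move=> r1 le1 r2 le2 H1 H2; rewrite equiv_wrt_lead_exp //; split => [E i|E].
    apply: (@lead_exps_vsum_inj R K val n s F r1 le1 H1 (lead_exps r1 le1) (lead_exps r2 le2)) E i.
      by move=> j; apply: leadP.
    by move=> j; case: (leadP r2 le2 j H2).
  by rewrite /vsum; apply: eq_bigr => i _; rewrite /lead_exps E.
Qed.
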